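(* Let $0<b<1$, $\omega\in\mathbb{R}$, $c\in\mathbb{R}$, $l\in\mathbb{N}$, $m\in\{-l,\dots,l\}\setminus\{0\}$, and let $Y_l^m\in\mathbb{E}_{l,m}$ be non-zero. Let $\psi_c(\varphi,\theta,t)=g(\theta)+c\lambda_{l,m}f(\theta)+Y_l^m(\varphi-ct,\theta)$ be the travelling-wave solution of the Euler equations \[ \left(\partial_t+\frac{1}{\cos\theta\,\rho(\theta)}\left[-\partial_\theta\psi\,\partial_\varphi+\partial_\varphi\psi\,\partial_\theta\right]\right)\left(\Delta\psi+\frac{2\omega\sin\theta}{\rho(\theta)}\right)=0 \] where $g,f\in C^{3,\alpha}\left(\left(-\frac{\pi}{2},\frac{\pi}{2}\right)\right)$ solve, respectively, $-\lambda_{l,m} g=\frac{1}{\cos\theta\,\rho}\left(\frac{\cos\theta}{\rho}g'\right)'+\frac{2\omega\sin\theta}{\rho}$ and $-\lambda_{l,m} f=\frac{1}{\cos\theta\,\rho}\left(\frac{\cos\theta}{\rho}f'\right)'+P(\theta)$ with $P(\theta)=\int_{-\pi/2}^{\theta}\cos s\,\rho(s)\,ds-\int_{-\pi/2}^{0}\cos s\,\rho(s)\,ds$. Then, for the given $Y_l^m$ and $c$, the zonal part $g+c\lambda_{l,m}f$ is unique up to an additive constant among $C^{3,\alpha}$ functions $h(\theta)$ with $\lim_{\theta\to\pm\pi/2}h'(\theta)=0$ for which $h(\theta)+Y_l^m(\varphi-ct,\theta)$ solves the Euler equations; hence the travelling-wave solution is unique in terms of its velocity field $U=J\operatorname{g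rad}\psi_c$.
   Context: The surface $\mathbb{S}^2$ denotes the biaxial ellipsoid with major axis $1$ and minor axis $b\in(0,1)$, parametrized by $(\varphi,\theta)\mapsto(\cos\varphi\cos\theta,\sin\varphi\cos\theta,b\sin\theta)$; functions are $2\pi$-periodic in $\varphi$. Write $\rho(\theta)=\sqrt{\sin^2\theta+b^2\cos^2\theta}$. The Laplace–Beltrami operator is $\Delta\psi=\frac{1}{\cos^2\theta}\partial_{\varphi\varphi}\psi+\frac{1}{\cos\theta\,\rho(\theta)}\partial_\theta\!\left(\frac{\cos\theta}{\rho(\theta)}\partial_\theta\psi\right)$. $\mathbb{E}_{l,m}$ is the $(l,m)$-th eigenspace of $-\Delta$ with eigenvalue $\lambda_{l,m}$; for $m\neq0$ it is assumed to have an orthonormal basis $\{y_1(\theta)e^{im\varphi},\,y_2(\theta)e^{-im\varphi}\}$ with smooth $y_1,y_2$. The velocity field is $U=J\operatorname{grad}\psi=\left(-\frac{1}{\rho}\partial_\theta\psi,\ \frac{1}{\cos\theta}\partial_\varphi\psi\right)$ in the orthonormal frame $\frac{1}{\cos\theta}\partial_\varphi,\ \frac{1}{\rho}\partial_\theta$. $C^{3,\alpha}$ is a Hölder space with exponent $\alpha\in(0,1)$. *)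

From Stdlib Require Import Reals Lra ZArith List.
From Coquelicot Require Import Coquelicot.
Open Scope R_scope.

Definition rho (b θ : R) : R := sqrt (sin θ ^ 2 + b ^ 2 * cos θ ^ 2).

Definition in_chart (θ : R) : Prop := - PI / 2 < θ < PI / 2.

Definition dphi (F : R -> R -> R) : R -> R -> R :=
  fun φ θ => Derive (fun x => F x θ) φ.
Definition dth (F : R -> R -> R) : R -> R -> R :=
  fun φ θ => Derive (fun y => F φ y) θ.

(* Laplace-Beltrami operator on the ellipsoid in (phi, theta) coordinates *)
Definition LB (b : R) (F : R -> R -> R) : R -> R -> R :=
  fun φ θ =>
    / (cos θ ^ 2) * dphi (dphi F) φ θ
    + / (cos θ * rho b θ) * Derive (fun y => cos y / rho b y * dth F φ y) θ.

(* iterated partial derivatives: true = d/dphi, false = d/dtheta *)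
Fixpoint iterD (w : list bool) (F : R -> R -> R) : R -> R -> R :=
  match w with
  | nil => F
  | cons d w' => (if d then dphi else dth) (iterD w' F)
  end.

Definition smooth_chart (F : R -> R -> R) : Prop :=
  forall (w : list bool) (φ θ : R), in_chart θ ->
    ex_derive (fun x => iterD w F x θ) φ /\
    ex_derive (fun y => iterD w F φ y) θ /\
    continuity_2d_pt (iterD w F) φ θ.

Definition periodic_phi (F : R -> R -> R) : Prop :=
  forall φ θ, F (φ + 2 * PI) θ = F φ θ.

Definition bounded_chart (F : R -> R -> R) : Prop :=
  exists M, forall φ θ, in_chart θ -> Rabs (F φ θ) <= M.

(* (real) eigenfunction of -Delta on the ellipsoid with eigenvalue lam:
   smooth in the chart, 2pi-periodic in phi, bounded (i.e. regular at the
   poles), and -Delta Y = lam Y *)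
Definition eigenfunction (b lam : R) (Y : R -> R -> R) : Prop :=
  smooth_chart Y /\ periodic_phi Y /\ bounded_chart Y /\
  forall φ θ, in_chart θ -> - LB b Y φ θ = lam * Y φ θ.

Definition mode_eig (b : R) (k : nat) (mu : R) : Prop :=
  exists y : R -> R, (exists θ, in_chart θ /\ y θ <> 0) /\
    eigenfunction b mu (fun φ θ => y θ * cos (INR k * φ)).

(* lam = lambda_{l,m}: |m| <= l and lam is the (l-|m|)-th (counting from 0)
   eigenvalue, in increasing order, among the mode-|m| eigenvalues *)
Definition eigval_lm (b : R) (l : nat) (m : Z) (lam : R) : Prop :=
  (Z.abs_nat m <= l)%nat /\ mode_eig b (Z.abs_nat m) lam /\
  exists s : list R, NoDup s /\ length s = (l - Z.abs_nat m)%nat /\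
    forall mu, In mu s <-> (mu < lam /\ mode_eig b (Z.abs_nat m) mu).

(* standing assumption: for m <> 0 the eigenspace of lambda_{l,m} is spanned by
   y1(theta) e^{i m phi}, y2(theta) e^{-i m phi}; for real functions: every real
   eigenfunction of eigenvalue lam is a(theta) cos(m phi) + c(theta) sin(m phi) *)
Definition eigenspace_pm_m (b : R) (m : Z) (lam : R) : Prop :=
  forall Z0 : R -> R -> R, eigenfunction b lam Z0 ->
    exists a c : R -> R, forall φ θ,
      Z0 φ θ = a θ * cos (IZR m * φ) + c θ * sin (IZR m * φ).

Definition in_E_lm (b : R) (m : Z) (lam : R) (Y : R -> R -> R) : Prop :=
  eigenfunction b lam Y /\
  exists a c : R -> R, forall φ θ,
    Y φ θ = a θ * cos (IZR m * φ) + c θ * sin (IZR m * φ).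

Definition C3alpha (α : R) (h : R -> R) : Prop :=
  (forall θ, in_chart θ ->
     ex_derive h θ /\ ex_derive (Derive_n h 1) θ /\ ex_derive (Derive_n h 2) θ) /\
  (exists M, forall θ, in_chart θ ->
     Rabs (h θ) <= M /\ Rabs (Derive_n h 1 θ) <= M /\
     Rabs (Derive_n h 2 θ) <= M /\ Rabs (Derive_n h 3 θ) <= M) /\
  (exists K, forall x y, in_chart x -> in_chart y ->
     Rabs (Derive_n h 3 x - Derive_n h 3 y) <= K * Rpower (Rabs (x - y)) α).

Definition Lzonal (b : R) (u : R -> R) (θ : R) : R :=
  / (cos θ * rho b θ) * Derive (fun y => cos y / rho b y * Derive u y) θ.

Definition Pfun (b θ : R) : R :=
  RInt (fun s => cos s * rho b s) (- PI / 2) θ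
  - RInt (fun s => cos s * rho b s) (- PI / 2) 0.

Definition euler_sol (b ω : R) (Ψ : R -> R -> R -> R) : Prop :=
  let q := fun φ θ t => LB b (fun x y => Ψ x y t) φ θ + 2 * ω * sin θ / rho b θ in
  forall φ θ t, in_chart θ ->
    Derive (fun s => q φ θ s) t
    + / (cos θ * rho b θ) *
      (- Derive (fun y => Ψ φ y t) θ * Derive (fun x => q x θ t) φ
       + Derive (fun x => Ψ x θ t) φ * Derive (fun y => q φ y t) θ) = 0.

(* velocity U = J grad psi in the orthonormal frame *)
Definition velocity (b : R) (Ψ : R -> R -> R -> R) (φ θ t : R) : R * R :=
  (- / rho b θ * Derive (fun y => Ψ φ y t) θ,
   / cos θ * Derive (fun x => Ψ x θ t) φ).

(* For psi = h(theta) + Y(phi - c t, theta) the absolute vorticity is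
   q = Z(theta) - lam Y(phi - c t, theta), where Z = Lzonal h + 2 omega sin/rho, so the Euler
   equation collapses to  d_phi Y * D' = 0  with  D = lam h + Z + c lam P.  Off the nodal set
   of d_phi Y this gives D' = 0; at the remaining points D' still vanishes, because there a
   nonzero slice of Y, which solves a regular second-order ODE, has a simple and hence isolated
   zero.  So D is a constant K, and v = h - g - c lam f - K/lam solves -Lzonal v = lam v; being
   bounded and (by bootstrapping the ODE) smooth, v is a zonal eigenfunction, which the
   standing assumption on the eigenspace forbids for m <> 0.  The velocity sees h only
   through h'. *)

From Stdlib Require Import Reals ZArith Lra List Classical.
From Coquelicot Require Import Coquelicot.
Open Scope R_scope.

Lemma cos_pos_chart θ : in_chart θ -> 0 < cos θ.
Proof. intros [H1 H2]; apply cos_gt_0; lra. Qed.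

Lemma in_chart_0 : in_chart 0.
Proof. pose proof PI_RGT_0; unfold in_chart; lra. Qed.

Lemma in_chart_between x y z :
  in_chart x -> in_chart y -> Rmin x y <= z <= Rmax x y -> in_chart z.
Proof. unfold in_chart, Rmin, Rmax; destruct (Rle_dec x y); intros; lra. Qed.

Lemma locally_in_chart θ : in_chart θ -> locally θ in_chart.
Proof. apply (open_and _ _ (open_gt _) (open_lt _)). Qed.

Lemma locally_chart (P : R -> Prop) θ :
  in_chart θ -> (forall y, in_chart y -> P y) -> locally θ P.
Proof. intros Hθ HP; exact (filter_imp _ _ HP (locally_in_chart θ Hθ)). Qed.

Lemma rho_pos b θ : 0 < b -> 0 < rho b θ.
Proof.
  intros Hb; apply sqrt_lt_R0.
  pose proof (sin2_cos2 θ); unfold Rsqr in *.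
  destruct (Req_dec (cos θ) 0) as [Hc | Hc]; [rewrite Hc in *; nra|].
  assert (0 < cos θ * cos θ) by (apply Rsqr_pos_lt; exact Hc).
  nra.
Qed.

Lemma is_derive_rho (b θ : R) : 0 < b ->
  is_derive (rho b) θ ((1 - b ^ 2) * sin θ * cos θ / rho b θ).
Proof.
  intros Hb; pose proof (rho_pos b θ Hb) as Hr.
  assert (Hs : 0 < sin θ ^ 2 + b ^ 2 * cos θ ^ 2).
  { destruct (Rle_lt_dec (sin θ ^ 2 + b ^ 2 * cos θ ^ 2) 0) as [H|H]; auto.
    unfold rho in Hr; rewrite sqrt_neg_0 in Hr; lra. }
  unfold rho; auto_derive; [lra|].
  change (sqrt (sin θ ^ 2 + b ^ 2 * cos θ ^ 2)) with (rho b θ).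
  replace (sqrt _) with (rho b θ) by (unfold rho; f_equal; ring).
  field; lra.
Qed.

(* Coefficients of the zonal operator: expressions in sin, cos, sec, rho and 1/rho.  The class
   is closed under (syntactic) differentiation, which keeps the regularity bootstrap finite. *)
Inductive coef :=
  | CConst (r : R) | CSin | CCos | CSec | CRho | CInvRho
  | CAdd (e1 e2 : coef) | CMul (e1 e2 : coef).

Fixpoint coef_eval (b : R) (e : coef) (θ : R) : R :=
  match e with
  | CConst r => r
  | CSin => sin θ
  | CCos => cos θ
  | CSec => / cos θ
  | CRho => rho b θ
  | CInvRho => / rho b θ
  | CAdd e1 e2 => coef_eval b e1 θ + coef_eval b e2 θ
  | CMul e1 e2 => coef_eval b e1 θ * coef_eval b e2 θ
  end.

Fixpoint coef_deriv (b : R) (e : coef) : coef :=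
  match e with
  | CConst _ => CConst 0
  | CSin => CCos
  | CCos => CMul (CConst (-1)) CSin
  | CSec => CMul CSin (CMul CSec CSec)
  | CRho => CMul (CConst (1 - b ^ 2)) (CMul CSin (CMul CCos CInvRho))
  | CInvRho =>
      CMul (CConst (b ^ 2 - 1)) (CMul CSin (CMul CCos (CMul CInvRho (CMul CInvRho CInvRho))))
  | CAdd e1 e2 => CAdd (coef_deriv b e1) (coef_deriv b e2)
  | CMul e1 e2 => CAdd (CMul (coef_deriv b e1) e2) (CMul e1 (coef_deriv b e2))
  end.

Lemma is_derive_coef (b : R) (e : coef) (θ : R) : 0 < b -> in_chart θ ->
  is_derive (coef_eval b e) θ (coef_eval b (coef_deriv b e) θ).
Proof.
  intros Hb Hθ; pose proof (cos_pos_chart θ Hθ); pose proof (rho_pos b θ Hb).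
  pose proof (is_derive_rho b θ Hb) as Hrho.
  induction e as [r| | | | | |e1 IH1 e2 IH2|e1 IH1 e2 IH2]; simpl.
  - auto_derive; auto.
  - auto_derive; auto; ring.
  - auto_derive; auto; ring.
  - auto_derive; [lra|]; field; lra.
  - eapply is_derive_ext; [intro; reflexivity|].
    replace (_ * _) with ((1 - b ^ 2) * sin θ * cos θ / rho b θ) by (field; lra); exact Hrho.
  - eapply is_derive_ext; [intro; reflexivity|].
    replace (_ * _) with (- ((1 - b ^ 2) * sin θ * cos θ / rho b θ) / (rho b θ ^ 2))
      by (field; lra).
    apply (is_derive_inv (rho b)); [exact Hrho | lra].
  - apply (is_derive_plus (coef_eval b e1) (coef_eval b e2)); auto.
  - replace (_ + _) with
      (coef_eval b (coef_deriv b e1) θ * coef_eval b e2 θ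
       + coef_eval b e1 θ * coef_eval b (coef_deriv b e2) θ) by ring.
    apply (is_derive_mult (coef_eval b e1) (coef_eval b e2)); auto.
    intros; apply Rmult_comm.
Qed.

Lemma ex_derive_coef (b : R) (e : coef) (θ : R) : 0 < b -> in_chart θ ->
  ex_derive (coef_eval b e) θ.
Proof. intros Hb Hθ; eexists; exact (is_derive_coef b e θ Hb Hθ). Qed.

Lemma is_derive_continuity_pt (f : R -> R) (x l : R) :
  is_derive f x l -> continuity_pt f x.
Proof.
  intros H; apply continuity_pt_filterlim.
  apply (ex_derive_continuous (K := R_AbsRing) (V := R_NormedModule)); now exists l.
Qed.

Lemma continuity_pt_coef (b : R) (e : coef) (θ : R) : 0 < b -> in_chart θ ->
  continuity_pt (coef_eval b e) θ.
Proof. intros Hb Hθ; exact (is_derive_continuity_pt _ _ _ (is_derive_coef b e θ Hb Hθ)). Qed.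

Lemma Derive_plus_const (F : R -> R) (K x : R) : Derive (fun y => F y + K) x = Derive F x.
Proof. unfold Derive; f_equal; apply Lim_ext; intro h; f_equal; ring. Qed.

Lemma eq_of_is_derive_0 (D : R -> R) (x y : R) :
  (forall z, Rmin x y <= z <= Rmax x y -> is_derive D z 0) -> D x = D y.
Proof.
  intros H; destruct (MVT_gen D x y (fun _ => 0)) as [c [_ Hc]].
  - intros z Hz; apply H; lra.
  - intros z Hz; exact (is_derive_continuity_pt _ _ _ (H z Hz)).
  - lra.
Qed.

Lemma is_derive_0_of_punctured (D : R -> R) (x0 d : R) : 0 < d ->
  (forall z, z <> x0 -> Rabs (z - x0) < d -> is_derive D z 0) ->
  continuity_pt D x0 -> is_derive D x0 0.
Proof.
  intros Hd H Hc.
  apply (is_derive_ext_loc (fun _ => D x0)); [|apply (is_derive_const (D x0))].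
  exists (mkposreal d Hd); intros z Hz; change (Rabs (z - x0) < d) in Hz.
  apply Rabs_def2 in Hz.
  destruct (MVT_gen D x0 z (fun _ => 0)) as [c [_ Hmvt]]; [| |lra].
  - intros y Hy; apply H;
      [|apply Rabs_def1]; unfold Rmin, Rmax in Hy; destruct (Rle_dec x0 z); lra.
  - intros y Hy; destruct (Req_dec y x0) as [->|Hy0]; [exact Hc|].
    apply (is_derive_continuity_pt _ _ 0), H; [exact Hy0|].
    apply Rabs_def1; unfold Rmin, Rmax in Hy; destruct (Rle_dec x0 z); lra.
Qed.

Lemma simple_zero_isolated (w : R -> R) (x0 l : R) :
  is_derive w x0 l -> l <> 0 -> w x0 = 0 ->
  exists d, 0 < d /\ forall z, z <> x0 -> Rabs (z - x0) < d -> w z <> 0.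
Proof.
  intros H Hl Hw; apply is_derive_Reals in H.
  destruct (H (Rabs l) (Rabs_pos_lt _ Hl)) as [d Hd].
  exists d; split; [apply cond_pos|]; intros z Hz Hzd Hwz.
  specialize (Hd (z - x0) ltac:(lra) Hzd).
  replace (x0 + (z - x0)) with z in Hd by ring.
  rewrite Hwz, Hw in Hd.
  replace ((0 - 0) / (z - x0) - l) with (- l) in Hd by (field; lra).
  rewrite Rabs_Ropp in Hd; lra.
Qed.

(* Gronwall: [E z * exp (- C * s * z)], with [s] the direction from [x0] to [x1], is
   nonincreasing along the segment. *)
Lemma gronwall_zero (E dE : R -> R) (C x0 x1 : R) :
  (forall z, Rmin x0 x1 <= z <= Rmax x0 x1 ->
     0 <= E z /\ is_derive E z (dE z) /\ Rabs (dE z) <= C * E z) ->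
  E x0 = 0 -> E x1 = 0.
Proof.
  intros H H0.
  assert (Hs : exists s, s * (x1 - x0) = Rabs (x1 - x0)).
  { destruct (Rle_dec x0 x1).
    - exists 1; rewrite Rabs_right; lra.
    - exists (-1); rewrite Rabs_left; lra. }
  destruct Hs as [s Hs].
  set (F := fun z => E z * exp (- C * s * z)).
  set (dF := fun z => (dE z - C * s * E z) * exp (- C * s * z)).
  assert (HF' : forall z, Rmin x0 x1 <= z <= Rmax x0 x1 -> is_derive F z (dF z)).
  { intros z Hz; destruct (H z Hz) as [_ [HdE _]].
    unfold F, dF; auto_derive; [now exists (dE z)|].
    replace (Derive (fun x : R => E x) z) with (dE z)
      by (symmetry; apply is_derive_unique, HdE); ring. }
  destruct (MVT_gen F x0 x1 dF) as [c [Hc HF]].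
  - intros z Hz; apply HF'; lra.
  - intros z Hz; exact (is_derive_continuity_pt _ _ _ (HF' z Hz)).
  - destruct (H c Hc) as [Hc0 [_ Hcb]].
    assert (Hx1 : Rmin x0 x1 <= x1 <= Rmax x0 x1)
      by (unfold Rmin, Rmax; destruct (Rle_dec x0 x1); lra).
    destruct (H x1 Hx1) as [HE1 _].
    unfold F, dF in HF; rewrite H0, Rmult_0_l, Rminus_0_r in HF.
    assert (Hd : dE c * (x1 - x0) <= Rabs (dE c) * Rabs (x1 - x0))
      by (rewrite <- Rabs_mult; apply Rle_abs).
    pose proof (Rabs_pos (x1 - x0)).
    pose proof (exp_pos (- C * s * c)); pose proof (exp_pos (- C * s * x1)).
    assert (E x1 * exp (- C * s * x1) <= 0); [|nra].
    rewrite HF.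
    replace ((dE c - C * s * E c) * exp (- C * s * c) * (x1 - x0))
      with (exp (- C * s * c) * (dE c * (x1 - x0) - C * E c * (s * (x1 - x0)))) by ring.
    rewrite Hs; apply Rmult_le_0_l; nra.
Qed.

Lemma Rabs_energy_deriv_le (w P r q : R) : 0 <= r ->
  Rabs (2 * w * (r * P) + 2 * P * (q * w)) <= (r + Rabs q) * (w * w + P * P).
Proof.
  intros Hr.
  replace (2 * w * (r * P) + 2 * P * (q * w)) with ((r + q) * (2 * w * P)) by ring.
  rewrite Rabs_mult.
  apply Rmult_le_compat; try apply Rabs_pos.
  - apply Rabs_le_between; pose proof (Rle_abs q); pose proof (Rle_abs (- q)).
    rewrite Rabs_Ropp in *; lra.
  - pose proof (Rle_0_sqr (w + P)); pose proof (Rle_0_sqr (w - P)); unfold Rsqr in *.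
    apply Rabs_le_between; split; nra.
Qed.

Definition sturm_liouville_sol (p Q w : R -> R) : Prop :=
  forall t, in_chart t ->
    ex_derive w t /\ is_derive (fun y => p y * Derive w y) t (Q t * w t).

Definition sturm_liouville_coefs (p Q : R -> R) : Prop :=
  forall t, in_chart t -> 0 < p t /\ continuity_pt p t /\ continuity_pt Q t.

(* Energy estimate: [w^2 + (p w')^2] obeys Gronwall's inequality. *)
Lemma sturm_liouville_unique (p Q w : R -> R) (x0 x1 : R) :
  sturm_liouville_coefs p Q -> sturm_liouville_sol p Q w ->
  in_chart x0 -> in_chart x1 -> w x0 = 0 -> Derive w x0 = 0 -> w x1 = 0.
Proof.
  intros Hpq Hw H0 H1 Hw0 Hd0.
  set (P := fun y => p y * Derive w y).
  set (E := fun y => w y * w y + P y * P y).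
  set (k := fun y => / p y + Rabs (Q y)).
  destruct (continuity_ab_maj k (Rmin x0 x1) (Rmax x0 x1)) as [M [HM _]];
    [apply Rmin_Rmax| |].
  { intros z Hz; destruct (Hpq z (in_chart_between _ _ _ H0 H1 Hz)) as [Hp [Hpc HQc]].
    apply continuity_pt_plus.
    - apply continuity_pt_inv; [exact Hpc | lra].
    - apply (continuity_pt_comp Q Rabs); [exact HQc | apply Rcontinuity_abs]. }
  assert (HE : E x1 = 0).
  { apply (gronwall_zero E (fun z => 2 * w z * Derive w z + 2 * P z * (Q z * w z)) (k M) x0 x1).
    2: { unfold E, P; rewrite Hw0, Hd0; ring. }
    intros z Hz; pose proof (in_chart_between _ _ _ H0 H1 Hz) as Hzc.
    destruct (Hw z Hzc) as [Hex HP]; destruct (Hpq z Hzc) as [Hp _].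
    assert (HE0 : 0 <= E z) by (unfold E; nra).
    split; [exact HE0|]; split.
    - replace (2 * w z * Derive w z + 2 * P z * (Q z * w z)) with
        (plus (plus (mult (Derive w z) (w z)) (mult (w z) (Derive w z)))
              (plus (mult (Q z * w z) (P z)) (mult (P z) (Q z * w z))))
        by (unfold plus, mult; simpl; ring).
      apply (is_derive_plus (fun y => w y * w y) (fun y => P y * P y)).
      + apply (is_derive_mult w w); auto using Derive_correct; intros; apply Rmult_comm.
      + apply (is_derive_mult P P); auto; intros; apply Rmult_comm.
    - apply Rle_trans with (k z * E z); [|apply Rmult_le_compat_r; auto].
      replace (Derive w z) with (/ p z * P z) by (unfold P; field; lra).
      apply Rabs_energy_deriv_le; left; apply Rinv_0_lt_compat, Hp. }
  unfold E in HE; nra.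
Qed.

Lemma sturm_liouville_simple_zero (p Q w : R -> R) (θ : R) :
  sturm_liouville_coefs p Q -> sturm_liouville_sol p Q w ->
  in_chart θ -> w θ = 0 -> (exists x, in_chart x /\ w x <> 0) ->
  exists d, 0 < d /\ forall z, z <> θ -> Rabs (z - θ) < d -> w z <> 0.
Proof.
  intros Hpq Hw Hθ Hw0 [x [Hx Hwx]].
  apply (simple_zero_isolated w θ (Derive w θ)); auto.
  - apply Derive_correct, (Hw θ Hθ).
  - intros Hd; apply Hwx, (sturm_liouville_unique p Q w θ x); auto.
Qed.

(* The zeros of a nonzero solution are simple, hence isolated, so [dD] vanishes on a
   punctured neighbourhood of [θ]. *)
Lemma is_derive_0_at_node (p Q w D dD : R -> R) (θ : R) :
  sturm_liouville_coefs p Q -> sturm_liouville_sol p Q w ->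
  in_chart θ -> w θ = 0 -> (exists x, in_chart x /\ w x <> 0) ->
  (forall z, in_chart z -> is_derive D z (dD z)) ->
  (forall z, in_chart z -> w z <> 0 -> dD z = 0) -> dD θ = 0.
Proof.
  intros Hpq Hw Hθ Hw0 Hnz HD Hoff.
  destruct (sturm_liouville_simple_zero p Q w θ Hpq Hw Hθ Hw0 Hnz) as [d1 [Hd1 Hiso]].
  destruct (locally_in_chart θ Hθ) as [d2 Hd2].
  assert (HD0 : is_derive D θ 0).
  { apply (is_derive_0_of_punctured D θ (Rmin d1 d2)).
    - apply Rmin_pos; [lra | apply cond_pos].
    - intros z Hzθ Hz; pose proof (Rmin_l d1 d2); pose proof (Rmin_r d1 d2).
      assert (Hzc : in_chart z) by (apply Hd2; change (Rabs (z - θ) < d2); lra).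
      rewrite <- (Hoff z Hzc (Hiso z Hzθ ltac:(lra))); apply HD, Hzc.
    - exact (is_derive_continuity_pt _ _ _ (HD θ Hθ)). }
  rewrite <- (is_derive_unique _ _ _ (HD θ Hθ)); exact (is_derive_unique _ _ _ HD0).
Qed.

Definition twice_derivable_chart (u : R -> R) : Prop :=
  forall θ, in_chart θ -> ex_derive u θ /\ ex_derive (Derive u) θ.

Definition thrice_derivable_chart (u : R -> R) : Prop :=
  forall θ, in_chart θ ->
    ex_derive u θ /\ ex_derive (Derive u) θ /\ ex_derive (Derive (Derive u)) θ.

Lemma C3alpha_thrice_derivable (α : R) (u : R -> R) :
  C3alpha α u -> thrice_derivable_chart u.
Proof. intros [H _]; exact H. Qed.

Lemma thrice_twice_derivable (u : R -> R) :
  thrice_derivable_chart u -> twice_derivable_chart u.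
Proof. intros H θ Hθ; destruct (H θ Hθ) as [? [? _]]; auto. Qed.


Lemma Derive_affine (u1 u2 : R -> R) (k K θ : R) :
  ex_derive u1 θ -> ex_derive u2 θ ->
  Derive (fun y => u1 y + k * u2 y + K) θ = Derive u1 θ + k * Derive u2 θ.
Proof.
  intros H1 H2; rewrite Derive_plus_const, Derive_plus, Derive_scal; auto.
  now apply ex_derive_scal.
Qed.

Lemma twice_derivable_affine (u1 u2 : R -> R) (k K : R) :
  twice_derivable_chart u1 -> twice_derivable_chart u2 ->
  twice_derivable_chart (fun y => u1 y + k * u2 y + K).
Proof.
  intros H1 H2 θ Hθ; destruct (H1 θ Hθ) as [H1a H1b]; destruct (H2 θ Hθ) as [H2a H2b].
  split; [auto_derive; auto|].
  apply (ex_derive_ext_loc (fun y => Derive u1 y + k * Derive u2 y)).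
  - apply locally_chart; [exact Hθ|]; intros y Hy.
    symmetry; apply Derive_affine; [apply H1 | apply H2]; exact Hy.
  - auto_derive; auto.
Qed.

Lemma bounded_chart_affine (u1 u2 : R -> R) (k K : R) :
  bounded_chart (fun _ θ => u1 θ) -> bounded_chart (fun _ θ => u2 θ) ->
  bounded_chart (fun _ θ => u1 θ + k * u2 θ + K).
Proof.
  intros [M1 H1] [M2 H2]; exists (M1 + Rabs k * M2 + Rabs K); intros φ θ Hθ.
  specialize (H1 φ θ Hθ); specialize (H2 φ θ Hθ).
  eapply Rle_trans; [apply Rabs_triang|].
  eapply Rle_trans; [apply Rplus_le_compat_r, Rabs_triang|].
  rewrite Rabs_mult; pose proof (Rabs_pos k).
  apply Rplus_le_compat_r, Rplus_le_compat; [exact H1 | now apply Rmult_le_compat_l].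
Qed.

Definition zonal_regular (u : R -> R) : Prop :=
  twice_derivable_chart u /\ bounded_chart (fun _ θ => u θ).

Lemma C3alpha_zonal_regular (α : R) (u : R -> R) : C3alpha α u -> zonal_regular u.
Proof.
  intros Hu; split; [exact (thrice_twice_derivable _ (C3alpha_thrice_derivable α u Hu))|].
  destruct Hu as [_ [[M HM] _]]; exists M; intros _ θ Hθ; apply (HM θ Hθ).
Qed.

Lemma zonal_regular_affine (u1 u2 : R -> R) (k K : R) :
  zonal_regular u1 -> zonal_regular u2 -> zonal_regular (fun y => u1 y + k * u2 y + K).
Proof.
  intros [D1 B1] [D2 B2]; split;
    [apply twice_derivable_affine | apply bounded_chart_affine]; assumption.
Qed.

Definition sl_weight : coef := CMul CCos CInvRho.

Lemma Lzonal_expand (b : R) (u : R -> R) (θ : R) :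
  0 < b -> in_chart θ -> ex_derive (Derive u) θ ->
  Lzonal b u θ = / (cos θ * rho b θ) *
    (coef_eval b (coef_deriv b sl_weight) θ * Derive u θ
     + cos θ / rho b θ * Derive (Derive u) θ).
Proof.
  intros Hb Hθ Hu; unfold Lzonal; f_equal.
  rewrite (Derive_mult (coef_eval b sl_weight) (Derive u)); auto.
  - now rewrite (is_derive_unique _ _ _ (is_derive_coef b sl_weight θ Hb Hθ)).
  - now apply ex_derive_coef.
Qed.

Lemma Lzonal_affine (b : R) (u1 u2 : R -> R) (k K θ : R) :
  0 < b -> in_chart θ -> twice_derivable_chart u1 -> twice_derivable_chart u2 ->
  Lzonal b (fun y => u1 y + k * u2 y + K) θ = Lzonal b u1 θ + k * Lzonal b u2 θ.
Proof.
  intros Hb Hθ H1 H2.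
  pose proof (twice_derivable_affine u1 u2 k K H1 H2 θ Hθ) as [_ H].
  assert (HD : forall y, in_chart y ->
    Derive (fun y => u1 y + k * u2 y + K) y = Derive u1 y + k * Derive u2 y + 0).
  { intros y Hy; rewrite Rplus_0_r; apply Derive_affine; [apply H1 | apply H2]; exact Hy. }
  rewrite !Lzonal_expand; try apply H1; try apply H2; auto.
  rewrite (Derive_ext_loc (Derive (fun y => u1 y + k * u2 y + K))
                          (fun y => Derive u1 y + k * Derive u2 y + 0))
    by (apply locally_chart; auto).
  rewrite (HD θ Hθ), (Derive_affine (Derive u1) (Derive u2))
    by (apply H1 || apply H2; exact Hθ); ring.
Qed.

Lemma ex_derive_Lzonal (b : R) (u : R -> R) (θ : R) :
  0 < b -> in_chart θ -> thrice_derivable_chart u -> ex_derive (Lzonal b u) θ.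
Proof.
  intros Hb Hθ Hu.
  apply (ex_derive_ext_loc (fun y => / (cos y * rho b y) *
    (coef_eval b (coef_deriv b sl_weight) y * Derive u y
     + cos y / rho b y * Derive (Derive u) y))).
  - apply locally_chart; [exact Hθ|]; intros y Hy.
    symmetry; apply Lzonal_expand; auto; apply Hu, Hy.
  - destruct (Hu θ Hθ) as [H1 [H2 H3]].
    pose proof (ex_derive_coef b (coef_deriv b sl_weight) θ Hb Hθ).
    assert (Hrho : ex_derive (rho b) θ) by (eexists; apply is_derive_rho, Hb).
    pose proof (cos_pos_chart θ Hθ); pose proof (rho_pos b θ Hb).
    assert (cos θ * rho b θ <> 0) by (apply Rgt_not_eq, Rmult_lt_0_compat; assumption).
    auto_derive; repeat split; auto; lra.
Qed.

Definition zonal_vorticity (b ω : R) (h : R -> R) (θ : R) : R :=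
  Lzonal b h θ + 2 * ω * sin θ / rho b θ.

Lemma ex_derive_zonal_vorticity (b ω : R) (h : R -> R) (θ : R) :
  0 < b -> in_chart θ -> thrice_derivable_chart h -> ex_derive (zonal_vorticity b ω h) θ.
Proof.
  intros Hb Hθ Hh; pose proof (ex_derive_Lzonal b h θ Hb Hθ Hh).
  assert (Hrho : ex_derive (rho b) θ) by (eexists; apply is_derive_rho, Hb).
  pose proof (rho_pos b θ Hb).
  unfold zonal_vorticity; auto_derive; repeat split; auto; lra.
Qed.

Lemma is_derive_Pfun (b θ : R) : 0 < b -> is_derive (Pfun b) θ (cos θ * rho b θ).
Proof.
  intros Hb.
  assert (Hc : forall z, continuous (fun s => cos s * rho b s) z).
  { intro z; apply (continuous_mult (fun s => cos s) (rho b)).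
    - apply continuity_pt_filterlim, continuity_cos.
    - apply continuity_pt_filterlim, (is_derive_continuity_pt _ _ _ (is_derive_rho b z Hb)). }
  unfold Pfun; replace (cos θ * rho b θ) with (minus (cos θ * rho b θ) zero)
    by (unfold minus, plus, opp, zero; simpl; ring).
  apply (is_derive_minus (fun y => RInt (fun s => cos s * rho b s) (- PI / 2) y)
           (fun _ => RInt (fun s => cos s * rho b s) (- PI / 2) 0) θ (cos θ * rho b θ) zero).
  - apply (is_derive_RInt (fun s => cos s * rho b s) _ (- PI / 2)); [|apply Hc].
    apply filter_forall; intro y; apply (RInt_correct (V := R_CompleteNormedModule)).
    apply (ex_RInt_continuous (V := R_CompleteNormedModule)); intros; apply Hc.
  - apply is_derive_const.
Qed.

Lemma iterD_zonal (v : R -> R) (w : list bool) (φ θ : R) :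
  iterD w (fun _ y => v y) φ θ =
  if forallb negb w then Derive_n v (length w) θ else 0.
Proof.
  revert φ θ; induction w as [|d w IH]; intros φ θ; [reflexivity|].
  destruct d; simpl.
  - unfold dphi; rewrite (Derive_ext _ (fun _ => if forallb negb w
                                          then Derive_n v (length w) θ else 0))
      by (intro; apply IH).
    apply Derive_const.
  - unfold dth; rewrite (Derive_ext _ (fun y => if forallb negb w
                                          then Derive_n v (length w) y else 0))
      by (intro; apply IH).
    destruct (forallb negb w); [reflexivity | apply Derive_const].
Qed.

Lemma LB_zonal (b : R) (v : R -> R) (φ θ : R) : LB b (fun _ y => v y) φ θ = Lzonal b v θ.
Proof.
  unfold LB, Lzonal, dphi at 1.
  rewrite (Derive_ext _ (fun _ => 0)) by (intro; unfold dphi; apply Derive_const).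
  rewrite Derive_const, Rmult_0_r, Rplus_0_l; reflexivity.
Qed.

Lemma eigenfunction_zonal (b lam : R) (v : R -> R) :
  (forall n θ, in_chart θ -> ex_derive (Derive_n v n) θ) ->
  bounded_chart (fun _ θ => v θ) ->
  (forall θ, in_chart θ -> - Lzonal b v θ = lam * v θ) ->
  eigenfunction b lam (fun _ θ => v θ).
Proof.
  intros Hs Hbd He; split; [|split; [|split]].
  - intros w φ θ Hθ; split; [|split].
    + apply (ex_derive_ext (fun _ => if forallb negb w then Derive_n v (length w) θ else 0));
        [intro; symmetry; apply iterD_zonal | apply ex_derive_const].
    + apply (ex_derive_ext (fun y => if forallb negb w then Derive_n v (length w) y else 0));
        [intro; symmetry; apply iterD_zonal|].
      destruct (forallb negb w); [apply Hs, Hθ | apply ex_derive_const].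
    + intro eps; destruct (forallb negb w) eqn:Hw.
      * destruct (Hs (length w) θ Hθ) as [l Hl].
        destruct (proj1 (continuity_pt_locally _ _) (is_derive_continuity_pt _ _ _ Hl) eps)
          as [d Hd].
        exists d; intros x y _ Hy; rewrite !iterD_zonal, Hw; apply Hd, Hy.
      * exists (mkposreal 1 Rlt_0_1); intros x y _ _.
        rewrite !iterD_zonal, Hw, Rminus_0_r, Rabs_R0; apply cond_pos.
  - intros φ θ; reflexivity.
  - exact Hbd.
  - intros φ θ Hθ; rewrite LB_zonal; apply He, Hθ.
Qed.

Lemma zonal_eigenfunction_eq_0 (b lam : R) (m : Z) (v : R -> R) :
  m <> 0%Z -> eigenspace_pm_m b m lam -> eigenfunction b lam (fun _ θ => v θ) ->
  forall θ, v θ = 0.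
Proof.
  intros Hm Hsp He θ; destruct (Hsp _ He) as [A [C HAC]].
  assert (HM : IZR m <> 0) by (apply not_0_IZR, Hm).
  pose proof (HAC 0 θ) as H0; pose proof (HAC (PI / IZR m) θ) as H1.
  rewrite Rmult_0_r, cos_0, sin_0 in H0.
  replace (IZR m * (PI / IZR m)) with PI in H1 by (field; exact HM).
  rewrite cos_PI, sin_PI in H1; lra.
Qed.

(* The constants are zonal eigenfunctions for the eigenvalue 0. *)
Lemma eigenvalue_neq_0 (b lam : R) (m : Z) :
  m <> 0%Z -> eigenspace_pm_m b m lam -> lam <> 0.
Proof.
  intros Hm Hsp ->.
  enough (H : forall θ : R, (fun _ => 1) θ = 0) by (specialize (H 0); simpl in H; lra).
  apply (zonal_eigenfunction_eq_0 b 0 m _ Hm Hsp), eigenfunction_zonal.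
  - intros [|n] θ _; [apply ex_derive_const|].
    apply (ex_derive_ext (fun _ => 0)); [intro; symmetry; apply Derive_n_const|].
    apply ex_derive_const.
  - exists 1; intros; rewrite Rabs_R1; lra.
  - intros θ _; unfold Lzonal.
    rewrite (Derive_ext _ (fun _ => 0)) by (intro; rewrite Derive_const; ring).
    rewrite Derive_const; ring.
Qed.

Lemma ex_derive_n_of_ode2 (b : R) (v : R -> R) (A B : coef) : 0 < b ->
  (forall θ, in_chart θ -> ex_derive v θ /\ ex_derive (Derive v) θ /\
     Derive (Derive v) θ = coef_eval b A θ * Derive v θ + coef_eval b B θ * v θ) ->
  forall n θ, in_chart θ -> ex_derive (Derive_n v n) θ.
Proof.
  intros Hb Hv.
  assert (Hstep : forall al be θ, in_chart θ ->
    is_derive (fun y => coef_eval b al y * v y + coef_eval b be y * Derive v y) θ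
      (coef_eval b (CAdd (coef_deriv b al) (CMul be B)) θ * v θ
       + coef_eval b (CAdd al (CAdd (coef_deriv b be) (CMul be A))) θ * Derive v θ)).
  { intros al be θ Hθ; destruct (Hv θ Hθ) as [H1 [H2 H3]].
    pose proof (is_derive_coef b al θ Hb Hθ); pose proof (is_derive_coef b be θ Hb Hθ).
    auto_derive; [repeat split; auto; eexists; eassumption|].
    rewrite (is_derive_unique (fun x : R => coef_eval b al x) θ _ H),
            (is_derive_unique (fun x : R => coef_eval b be x) θ _ H0).
    change (Derive (fun x : R => v x) θ) with (Derive v θ).
    change (Derive (fun x : R => Derive v x) θ) with (Derive (Derive v) θ).
    simpl; rewrite H3; ring. }
  (* Every derivative of [v] has the form [al v + be v'] with coefficients [al], [be]. *)
  assert (Hform : forall n, exists al be, forall θ, in_chart θ ->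
    Derive_n v n θ = coef_eval b al θ * v θ + coef_eval b be θ * Derive v θ).
  { induction n as [|n [al [be IH]]].
    - exists (CConst 1), (CConst 0); intros; simpl; ring.
    - exists (CAdd (coef_deriv b al) (CMul be B)),
             (CAdd al (CAdd (coef_deriv b be) (CMul be A))).
      intros θ Hθ; simpl.
      rewrite (Derive_ext_loc _ (fun y => coef_eval b al y * v y + coef_eval b be y * Derive v y))
        by (apply locally_chart; auto).
      apply is_derive_unique, Hstep, Hθ. }
  intros n θ Hθ; destruct (Hform n) as [al [be H]].
  apply (ex_derive_ext_loc (fun y => coef_eval b al y * v y + coef_eval b be y * Derive v y)).
  - apply locally_chart; [exact Hθ|]; intros y Hy; symmetry; apply H, Hy.
  - eexists; apply Hstep, Hθ.
Qed.

Lemma zonal_solution_eq_0 (b lam : R) (m : Z) (v : R -> R) :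
  0 < b -> m <> 0%Z -> eigenspace_pm_m b m lam -> zonal_regular v ->
  (forall θ, in_chart θ -> - Lzonal b v θ = lam * v θ) -> forall θ, v θ = 0.
Proof.
  intros Hb Hm Hsp [Hv Hbd] HL.
  apply (zonal_eigenfunction_eq_0 b lam m v Hm Hsp), eigenfunction_zonal; auto.
  (* [-Lzonal v = lam v] solved for [v''] *)
  apply (ex_derive_n_of_ode2 b v
           (CMul (CConst (-1)) (CMul (coef_deriv b sl_weight) (CMul CRho CSec)))
           (CMul (CConst (- lam)) (CMul CRho CRho)) Hb).
  intros θ Hθ; destruct (Hv θ Hθ) as [H1 H2]; do 2 (split; [assumption|]).
  pose proof (HL θ Hθ) as E; rewrite Lzonal_expand in E by auto.
  pose proof (cos_pos_chart θ Hθ); pose proof (rho_pos b θ Hb).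
  set (W := coef_eval b (coef_deriv b sl_weight) θ) in *.
  set (X := Derive (Derive v) θ) in *.
  assert (E' : cos θ / rho b θ * X = - (lam * v θ) * (cos θ * rho b θ) - W * Derive v θ).
  { rewrite <- E; field; lra. }
  replace X with (rho b θ / cos θ * (cos θ / rho b θ * X)) by (field; lra).
  rewrite E'; cbn [coef_eval]; fold W; field; lra.
Qed.

Section FourierMode.

Variables (b lam : R) (m : Z) (yc ys : R -> R) (Y : R -> R -> R).
Hypothesis Hb : 0 < b.
Hypothesis HY : eigenfunction b lam Y.
Hypothesis HYmode : forall φ θ, Y φ θ = yc θ * cos (IZR m * φ) + ys θ * sin (IZR m * φ).

Definition Yphi (φ θ : R) : R := IZR m * (ys θ * cos (IZR m * φ) - yc θ * sin (IZR m * φ)).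

Definition mode_potential : coef :=
  CAdd (CMul (CConst (IZR m ^ 2)) (CMul CSec CRho)) (CMul (CConst (- lam)) (CMul CCos CRho)).

Lemma Derive_phi_mode (K s φ θ : R) :
  Derive (fun x => K + Y (x - s) θ) φ = Yphi (φ - s) θ.
Proof.
  rewrite (Derive_ext _ (fun x => K + (yc θ * cos (IZR m * (x - s))
                                       + ys θ * sin (IZR m * (x - s)))))
    by (intro; rewrite HYmode; reflexivity).
  apply is_derive_unique; unfold Yphi, Rminus; auto_derive; auto; ring.
Qed.

Lemma Derive_phi_Yphi (s φ θ : R) :
  Derive (fun x => Yphi (x - s) θ) φ = - IZR m ^ 2 * Y (φ - s) θ.
Proof. rewrite HYmode; apply is_derive_unique; unfold Yphi, Rminus; auto_derive; auto; ring. Qed.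

Lemma dphi2_travelling (K : R -> R) (s φ θ : R) :
  dphi (dphi (fun x y => K y + Y (x - s) y)) φ θ = - IZR m ^ 2 * Y (φ - s) θ.
Proof.
  unfold dphi at 1.
  rewrite (Derive_ext _ (fun x => Yphi (x - s) θ)) by (intro; apply Derive_phi_mode).
  apply Derive_phi_Yphi.
Qed.

Lemma dphi2_mode (φ θ : R) : dphi (dphi Y) φ θ = - IZR m ^ 2 * Y φ θ.
Proof.
  rewrite <- (Rminus_0_r φ) at 2; rewrite <- (dphi2_travelling (fun _ => 0) 0).
  unfold dphi; apply Derive_ext; intro x; apply Derive_ext; intro y.
  now rewrite Rminus_0_r, Rplus_0_l.
Qed.

Lemma slice_sturm_liouville (φ0 : R) :
  sturm_liouville_sol (coef_eval b sl_weight) (coef_eval b mode_potential) (fun θ => Y φ0 θ).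
Proof.
  destruct HY as [Hsm [_ [_ Heig]]]; intros θ Hθ.
  destruct (Hsm nil φ0 θ Hθ) as [_ [H0 _]]; destruct (Hsm (false :: nil) φ0 θ Hθ) as [_ [H1 _]].
  split; [exact H0|].
  assert (Hex : ex_derive (fun y => coef_eval b sl_weight y * dth Y φ0 y) θ).
  { apply (ex_derive_mult (coef_eval b sl_weight) (dth Y φ0)); [apply ex_derive_coef|]; auto. }
  pose proof (Derive_correct _ _ Hex) as HD.
  pose proof (Heig φ0 θ Hθ) as He; unfold LB in He; rewrite dphi2_mode in He.
  pose proof (cos_pos_chart θ Hθ); pose proof (rho_pos b θ Hb).
  set (X := Derive (fun y => cos y / rho b y * dth Y φ0 y) θ) in *.
  replace (coef_eval b mode_potential θ * Y φ0 θ) with X; [exact HD|].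
  replace X with (cos θ * rho b θ * (/ (cos θ * rho b θ) * X)) by (field; lra).
  replace (/ (cos θ * rho b θ) * X) with (IZR m ^ 2 / cos θ ^ 2 * Y φ0 θ - lam * Y φ0 θ)
    by (rewrite <- He; unfold X; field; lra).
  simpl; field; lra.
Qed.

Lemma sturm_liouville_coefs_mode :
  sturm_liouville_coefs (coef_eval b sl_weight) (coef_eval b mode_potential).
Proof.
  intros θ Hθ; pose proof (cos_pos_chart θ Hθ); pose proof (rho_pos b θ Hb).
  split; [|split; apply continuity_pt_coef; auto].
  simpl; apply Rmult_lt_0_compat; [|apply Rinv_0_lt_compat]; assumption.
Qed.

Lemma LB_travelling (K : R -> R) (s φ θ : R) : in_chart θ -> twice_derivable_chart K ->
  LB b (fun x y => K y + Y (x - s) y) φ θ = Lzonal b K θ - lam * Y (φ - s) θ.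
Proof.
  intros Hθ HK; destruct HY as [Hsm [_ [_ Heig]]].
  rewrite <- (Heig (φ - s) θ Hθ); unfold LB; rewrite dphi2_travelling, dphi2_mode.
  rewrite (Derive_ext_loc _ (fun y => cos y / rho b y * Derive K y
                                      + cos y / rho b y * dth Y (φ - s) y)).
  2: { apply locally_chart; [exact Hθ|]; intros y Hy; unfold dth.
       rewrite Derive_plus; [apply Rmult_plus_distr_l | apply HK, Hy | apply (Hsm nil (φ - s) y Hy)]. }
  rewrite Derive_plus; [unfold Lzonal; ring | |].
  - apply (ex_derive_mult (coef_eval b sl_weight) (Derive K));
      [apply ex_derive_coef; auto | apply HK, Hθ].
  - apply (ex_derive_mult (coef_eval b sl_weight) (dth Y (φ - s)));
      [apply ex_derive_coef; auto | apply (Hsm (false :: nil) (φ - s) θ Hθ)].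
Qed.

Lemma is_derive_mode_affine (u v K k θ t : R) :
  is_derive (fun t => K + k * Y (u * t + v) θ) t (k * u * Yphi (u * t + v) θ).
Proof.
  apply (is_derive_ext (fun t => K + k * (yc θ * cos (IZR m * (u * t + v))
                                          + ys θ * sin (IZR m * (u * t + v)))));
    [intro; rewrite HYmode; reflexivity|].
  unfold Yphi; auto_derive; auto; ring.
Qed.

Lemma euler_travelling_wave (ω c : R) (h : R -> R) :
  thrice_derivable_chart h ->
  euler_sol b ω (fun φ θ t => h θ + Y (φ - c * t) θ) ->
  forall φ θ, in_chart θ ->
    Yphi φ θ * (lam * Derive h θ + Derive (zonal_vorticity b ω h) θ
                + c * lam * (cos θ * rho b θ)) = 0.
Proof.
  intros Hh Heul φ θ Hθ.
  pose proof (Heul φ θ 0 Hθ) as E; cbv zeta beta in E.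
  set (Z := zonal_vorticity b ω h) in *.
  assert (Hq : forall s x y, in_chart y ->
    LB b (fun x0 y0 => h y0 + Y (x0 - s) y0) x y + 2 * ω * sin y / rho b y
    = Z y + - lam * Y (1 * x + - s) y).
  { intros s x y Hy; rewrite LB_travelling by (auto using thrice_twice_derivable).
    unfold Z, zonal_vorticity; replace (1 * x + - s) with (x - s) by ring; ring. }
  assert (HYθ : ex_derive (fun y => Y (φ - c * 0) y) θ)
    by apply (slice_sturm_liouville (φ - c * 0) θ Hθ).
  assert (Ht : Derive (fun t => LB b (fun x y => h y + Y (x - c * t) y) φ θ
                                + 2 * ω * sin θ / rho b θ) 0 = lam * c * Yphi φ θ).
  { rewrite (Derive_ext _ (fun t => Z θ + - lam * Y (- c * t + φ) θ)).
    - rewrite (is_derive_unique _ _ _ (is_derive_mode_affine _ _ _ _ θ 0)).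
      replace (- c * 0 + φ) with φ by ring; ring.
    - intro t; rewrite Hq by exact Hθ; do 3 f_equal; ring. }
  assert (Hφ : Derive (fun x => LB b (fun x0 y => h y + Y (x0 - c * 0) y) x θ
                                + 2 * ω * sin θ / rho b θ) φ = - lam * Yphi (φ - c * 0) θ).
  { rewrite (Derive_ext _ (fun x => Z θ + - lam * Y (1 * x + - (c * 0)) θ))
      by (intro; apply Hq, Hθ).
    rewrite (is_derive_unique _ _ _ (is_derive_mode_affine _ _ _ _ θ φ)).
    replace (1 * φ + - (c * 0)) with (φ - c * 0) by ring; ring. }
  assert (Hθq : Derive (fun y => LB b (fun x y0 => h y0 + Y (x - c * 0) y0) φ y
                                 + 2 * ω * sin y / rho b y) θ
                = Derive Z θ - lam * Derive (fun y => Y (φ - c * 0) y) θ).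
  { rewrite (Derive_ext_loc _ (fun y => Z y - lam * Y (φ - c * 0) y)).
    - rewrite Derive_minus, Derive_scal; auto.
      + apply ex_derive_zonal_vorticity; assumption.
      + now apply ex_derive_scal.
    - apply locally_chart; [exact Hθ|]; intros y Hy; rewrite Hq by exact Hy.
      replace (1 * φ + - (c * 0)) with (φ - c * 0) by ring; ring. }
  rewrite Ht, Hφ, Hθq, Derive_phi_mode, (Derive_plus h (fun y : R => Y (φ - c * 0) y)) in E;
    [|apply Hh, Hθ | exact HYθ].
  replace (φ - c * 0) with φ in * by ring.
  pose proof (cos_pos_chart θ Hθ); pose proof (rho_pos b θ Hb).
  match type of E with ?L = 0 => transitivity (cos θ * rho b θ * L) end;
    [field; lra | rewrite E; ring].
Qed.

(* Where [yc] or [ys] is nonzero some [Yphi φ] is; at the common zeros one argues on a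
   nonzero slice [Y 0 = yc] or [Y (π/2m) = ys], whose zeros are isolated. *)
Lemma eq_0_of_Yphi_mul (D dD : R -> R) :
  m <> 0%Z -> (exists φ θ, in_chart θ /\ Y φ θ <> 0) ->
  (forall θ, in_chart θ -> is_derive D θ (dD θ)) ->
  (forall φ θ, in_chart θ -> Yphi φ θ * dD θ = 0) ->
  forall θ, in_chart θ -> dD θ = 0.
Proof.
  intros Hm [φ1 [θ1 [Hθ1 HY1]]] HD HYD θ Hθ.
  assert (HM : IZR m <> 0) by (apply not_0_IZR, Hm).
  set (q := PI / (2 * IZR m)).
  assert (Hq : IZR m * q = PI / 2) by (unfold q; field; exact HM).
  assert (HY0 : forall y, Y 0 y = yc y)
    by (intro; rewrite HYmode, Rmult_0_r, cos_0, sin_0; ring).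
  assert (HYq : forall y, Y q y = ys y)
    by (intro; rewrite HYmode, Hq, cos_PI2, sin_PI2; ring).
  assert (Hoff : forall z, in_chart z -> yc z <> 0 \/ ys z <> 0 -> dD z = 0).
  { intros z Hz Hcs.
    assert (Hφ : exists φ, Yphi φ z <> 0).
    { destruct Hcs as [Hc | Hs]; [exists q | exists 0]; unfold Yphi;
        [rewrite Hq, cos_PI2, sin_PI2 | rewrite Rmult_0_r, cos_0, sin_0];
        (apply Rmult_integral_contrapositive_currified; [exact HM|]); lra. }
    destruct Hφ as [φ Hφ].
    destruct (Rmult_integral _ _ (HYD φ z Hz)) as [H|H]; [contradiction | exact H]. }
  assert (Hslice : forall φ0 (w : R -> R), (forall y, Y φ0 y = w y) ->
            (forall z, in_chart z -> w z <> 0 -> dD z = 0) ->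
            w θ = 0 -> (exists x, in_chart x /\ w x <> 0) -> dD θ = 0).
  { intros φ0 w Hw Hwoff Hwθ [x [Hx Hwx]].
    apply (is_derive_0_at_node _ _ (fun y => Y φ0 y) D dD θ sturm_liouville_coefs_mode
             (slice_sturm_liouville φ0) Hθ); auto.
    - now rewrite Hw.
    - exists x; now rewrite Hw.
    - intros z Hz; rewrite Hw; apply Hwoff, Hz. }
  destruct (Req_dec (yc θ) 0) as [Hc0|Hc0]; [|apply Hoff; auto].
  destruct (Req_dec (ys θ) 0) as [Hs0|Hs0]; [|apply Hoff; auto].
  destruct (classic (exists x, in_chart x /\ yc x <> 0)) as [Hnc|Hnc].
  { apply (Hslice 0 yc HY0); auto. }
  destruct (classic (exists x, in_chart x /\ ys x <> 0)) as [Hns|Hns].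
  { apply (Hslice q ys HYq); auto. }
  exfalso; apply HY1; rewrite HYmode.
  destruct (Req_dec (yc θ1) 0) as [Hc1|Hc1]; [|exfalso; apply Hnc; eauto].
  destruct (Req_dec (ys θ1) 0) as [Hs1|Hs1]; [|exfalso; apply Hns; eauto].
  rewrite Hc1, Hs1; ring.
Qed.

Lemma euler_travelling_wave_first_integral (ω c : R) (h : R -> R) :
  m <> 0%Z -> (exists φ θ, in_chart θ /\ Y φ θ <> 0) -> thrice_derivable_chart h ->
  euler_sol b ω (fun φ θ t => h θ + Y (φ - c * t) θ) ->
  exists K, forall θ, in_chart θ ->
    lam * h θ + zonal_vorticity b ω h θ + c * lam * Pfun b θ = K.
Proof.
  intros Hm Hnz Hh Heul.
  set (D := fun θ => lam * h θ + zonal_vorticity b ω h θ + c * lam * Pfun b θ).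
  set (dD := fun θ => lam * Derive h θ + Derive (zonal_vorticity b ω h) θ
                      + c * lam * (cos θ * rho b θ)).
  assert (HD : forall θ, in_chart θ -> is_derive D θ (dD θ)).
  { intros θ Hθ; destruct (Hh θ Hθ) as [Hh1 _].
    pose proof (ex_derive_zonal_vorticity b ω h θ Hb Hθ Hh) as HZ.
    pose proof (is_derive_Pfun b θ Hb) as HP.
    unfold D, dD; auto_derive; [repeat split; auto; eexists; exact HP|].
    change (Derive (fun x : R => h x) θ) with (Derive h θ).
    change (Derive (fun x : R => zonal_vorticity b ω h x) θ)
      with (Derive (zonal_vorticity b ω h) θ).
    change (Derive (fun x : R => Pfun b x) θ) with (Derive (Pfun b) θ).
    rewrite (is_derive_unique _ _ _ HP); ring. }
  exists (D 0); intros θ Hθ.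
  apply (eq_of_is_derive_0 D θ 0); intros z Hz.
  pose proof (in_chart_between θ 0 z Hθ in_chart_0 Hz) as Hzc.
  rewrite <- (eq_0_of_Yphi_mul D dD Hm Hnz HD (euler_travelling_wave ω c h Hh Heul) z Hzc).
  apply HD, Hzc.
Qed.

End FourierMode.

Lemma zonal_part_of_first_integral (b ω c lam K : R) (m : Z) (g f h : R -> R) :
  0 < b -> m <> 0%Z -> eigenspace_pm_m b m lam ->
  zonal_regular g -> zonal_regular f -> zonal_regular h ->
  (forall θ, in_chart θ -> - lam * g θ = Lzonal b g θ + 2 * ω * sin θ / rho b θ) ->
  (forall θ, in_chart θ -> - lam * f θ = Lzonal b f θ + Pfun b θ) ->
  (forall θ, in_chart θ -> lam * h θ + zonal_vorticity b ω h θ + c * lam * Pfun b θ = K) ->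
  forall θ, in_chart θ -> h θ = g θ + c * lam * f θ + K / lam.
Proof.
  intros Hb Hm Hsp Rg Rf Rh Hgeq Hfeq HK.
  pose proof (eigenvalue_neq_0 b lam m Hm Hsp) as Hlam.
  set (w := fun y => g y + c * lam * f y + 0).
  assert (Rw : zonal_regular w) by (apply zonal_regular_affine; assumption).
  set (v := fun y => h y + -1 * w y + - (K / lam)).
  enough (Hv : forall θ, v θ = 0) by (intros θ _; specialize (Hv θ); unfold v, w in Hv; lra).
  apply (zonal_solution_eq_0 b lam m v Hb Hm Hsp); [apply zonal_regular_affine; assumption|].
  intros θ Hθ; unfold v.
  rewrite (Lzonal_affine b h w (-1) (- (K / lam)) θ Hb Hθ (proj1 Rh) (proj1 Rw)).
  unfold w; rewrite (Lzonal_affine b g f (c * lam) 0 θ Hb Hθ (proj1 Rg) (proj1 Rf)).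
  specialize (HK θ Hθ); specialize (Hgeq θ Hθ); specialize (Hfeq θ Hθ).
  unfold zonal_vorticity in HK.
  replace (Lzonal b h θ) with (K - lam * h θ - 2 * ω * sin θ / rho b θ - c * lam * Pfun b θ)
    by lra.
  replace (Lzonal b g θ) with (- lam * g θ - 2 * ω * sin θ / rho b θ) by lra.
  replace (Lzonal b f θ) with (- lam * f θ - Pfun b θ) by lra.
  pose proof (rho_pos b θ Hb); field; split; [exact Hlam | lra].
Qed.

Lemma velocity_zonal_shift (b : R) (h1 h2 : R -> R) (Ψ : R -> R -> R -> R) (K φ θ t : R) :
  in_chart θ -> (forall y, in_chart y -> h1 y = h2 y + K) ->
  velocity b (fun φ' θ' t' => h1 θ' + Ψ φ' θ' t') φ θ t =
  velocity b (fun φ' θ' t' => h2 θ' + Ψ φ' θ' t') φ θ t.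
Proof.
  intros Hθ Hh; unfold velocity; f_equal; f_equal.
  - rewrite (Derive_ext_loc _ (fun y => (h2 y + Ψ φ y t) + K)).
    + apply Derive_plus_const.
    + apply locally_chart; [exact Hθ|]; intros y Hy; rewrite Hh by exact Hy; ring.
  - rewrite (Derive_ext _ (fun x => (h2 θ + Ψ x θ t) + (h1 θ - h2 θ))) by (intro; ring).
    apply Derive_plus_const.
Qed.

Theorem theorem5
  (b ω c α : R) (l : nat) (m : Z) (lam : R)
  (Y : R -> R -> R) (g f : R -> R) :
  0 < b < 1 ->
  0 < α < 1 ->
  m <> 0%Z ->
  eigval_lm b l m lam ->
  eigenspace_pm_m b m lam ->
  in_E_lm b m lam Y ->
  (exists φ θ, in_chart θ /\ Y φ θ <> 0) ->
  C3alpha α g ->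
  C3alpha α f ->
  (forall θ, in_chart θ ->
     - lam * g θ = Lzonal b g θ + 2 * ω * sin θ / rho b θ) ->
  (forall θ, in_chart θ ->
     - lam * f θ = Lzonal b f θ + Pfun b θ) ->
  forall h : R -> R,
    C3alpha α h ->
    filterlim (Derive h) (at_left (PI / 2)) (locally 0) ->
    filterlim (Derive h) (at_right (- PI / 2)) (locally 0) ->
    euler_sol b ω (fun φ θ t => h θ + Y (φ - c * t) θ) ->
    (exists K : R, forall θ, in_chart θ -> h θ = g θ + c * lam * f θ + K) /\
    (forall φ θ t, in_chart θ ->
       velocity b (fun φ' θ' t' => h θ' + Y (φ' - c * t') θ') φ θ t =
       velocity b (fun φ' θ' t' => g θ' + c * lam * f θ' + Y (φ' - c * t') θ') φ θ t).
Proof.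
  (* The index [l], the Hölder exponent and the boundary behaviour of [h'] are not needed:
     the standing eigenspace hypothesis already excludes zonal eigenfunctions. *)
  intros [Hb _] _ Hm _ Hsp [HY [yc [ys HYmode]]] HYnz Hg Hf Hgeq Hfeq h Hh _ _ Heul.
  destruct (euler_travelling_wave_first_integral b lam m yc ys Y Hb HY HYmode ω c h Hm HYnz
              (C3alpha_thrice_derivable α h Hh) Heul) as [K HK].
  pose proof (zonal_part_of_first_integral b ω c lam K m g f h Hb Hm Hsp
                (C3alpha_zonal_regular α g Hg) (C3alpha_zonal_regular α f Hf)
                (C3alpha_zonal_regular α h Hh) Hgeq Hfeq HK) as Hhgf.
  split; [now exists (K / lam)|].
  intros φ θ t Hθ; exact (velocity_zonal_shift b h _ _ (K / lam) φ θ t Hθ Hhgf).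
Qed.
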